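(* Let $\tilde{H}\in\mathbb{C}^{K\times L}$, let $\tau_1,\dots,\tau_L\ge0$ be the eigenvalues of $\tilde{H}^\dagger\tilde{H}$, let $N\ge1$, and let $G\in\mathbb{C}^{N\times N}$ be a Hermitian positive definite matrix. Let $W=(\tilde{H}^\dagger\tilde{H})\otimes I_N$ and let $W=V_W\Lambda_W V_W^\dagger$ be an eigendecomposition with $V_W$ unitary and $\Lambda_W$ diagonal whose $j$-th diagonal entry is $\tau_{\lceil j/N\rceil}$, $j=1,\dots,NL$. Let $\sigma_0^2>0$, $\mu>0$, and $\bar{\alpha}_j=\sigma_0^2\big(\frac1\mu-\frac{1}{\tau_{\lceil j/N\rceil}}\big)^+$ for $j=1,\dots,NL$, and put $\bar{K}=V_W\,\mathrm{diag}(\bar{\alpha}_1,\dots,\bar{\alpha}_{NL})\,V_W^\dagger$. Then the matrix $\bar{\Sigma}_A=(I_L\otimes G)^{-1}\bar{K}$ is Hermitian and positive semidefinite (hence a valid covariance matrix).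
   Context: Notation: $\dagger$ is conjugate transpose, $\otimes$ the Kronecker product, $I_n$ the $n\times n$ identity, $(a)^+=\max(a,0)$ with the convention $(\frac1\mu-\frac10)^+=0$, $\lceil\cdot\rceil$ the ceiling. In the paper's application, $G$ is the Toeplitz matrix $(G)_{n,m}=g((n-m)\delta T)$ of samples of a raised cosine pulse and $\mu$ is fixed by a power constraint, but the conclusion is stated for the matrices as given. *)

From mathcomp Require Import all_boot all_order all_algebra.
From mathcomp Require mxtens.
Set Implicit Arguments. Unset Strict Implicit. Unset Printing Implicit Defensive.
Import Order.TTheory GRing.Theory Num.Theory.
Local Open Scope ring_scope.
Local Open Scope sesquilinear_scope.

(* Kronecker product A (x) B, with the standard index convention
   (A (x) B)_{i*p+k, j*q+l} = A_{i,j} B_{k,l} (mxtens_index). *)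
Notation kron A B := (mxtens.tensmx A B).

Notation "M ^H" := (M ^t*) (at level 30, format "M ^H").

Definition psdmx {C : numClosedFieldType} {n : nat} (A : 'M[C]_n) : Prop :=
  A \is hermsymmx /\ forall v : 'rV[C]_n, 0 <= (v *m A *m v ^t*) 0 0.

Definition pdmx {C : numClosedFieldType} {n : nat} (A : 'M[C]_n) : Prop :=
  A \is hermsymmx /\ forall v : 'rV[C]_n, v != 0 -> 0 < (v *m A *m v ^t*) 0 0.

(* (1/mu - 1/t)^+ with the convention (1/mu - 1/0)^+ = 0. *)
Definition posp_inv {C : numClosedFieldType} (mu t : C) : C :=
  if t == 0 then 0
  else if 0 <= mu^-1 - t^-1 then mu^-1 - t^-1 else 0.

(* For the 0-based index j of 'I_(L*N), the block index j %/ N : 'I_L,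
   i.e. ceil(j'/N) for the 1-based index j' = j+1 (shifted to 0-based). *)
Definition blk {L N : nat} (j : 'I_(L * N)) : 'I_L := (mxtens.mxtens_unindex j).1.

(* Conjugating by the unitary V, any matrix commuting with W = (H^H H) (x) I_N
   commutes with every spectral function V f(Lambda_W) V^H of W.  This applies
   to S = (I_L (x) G)^-1, since I_L (x) G commutes with W, and to the function
   P = V diag(sqrt alpha) V^H, the Hermitian square root of Kbar.  Hence
   S Kbar = S P P = P S P^H is congruent to the positive semidefinite S. *)

From mathcomp Require Import all_boot all_order all_algebra.
From mathcomp Require Import mxtens.

Set Implicit Arguments.
Unset Strict Implicit.
Unset Printing Implicit Defensive.
Import Order.TTheory GRing.Theory Num.Theory.
Local Open Scope ring_scope.
Local Open Scope sesquilinear_scope.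

Lemma comm_diag_mx_map (R : idomainType) n (B : 'M[R]_n) (d : 'rV[R]_n)
    (f : R -> R) :
  comm_mx B (diag_mx d) -> comm_mx B (diag_mx (map_mx f d)).
Proof.
move=> BdC; apply/matrixP=> i j; rewrite mul_mx_diag mul_diag_mx !mxE.
have /matrixP/(_ i j) := BdC; rewrite mul_mx_diag mul_diag_mx !mxE => Bd.
have [->|Bij] := eqVneq (B i j) 0; first by rewrite mulr0 mul0r.
have -> : d 0 j = d 0 i by apply: (mulfI Bij); rewrite Bd mulrC.
exact: mulrC.
Qed.

(* No invertibility hypothesis: [invmx A = A] when [A] is singular. *)
Lemma comm_mx_invmx (R : comUnitRingType) n (A B : 'M[R]_n) :
  comm_mx A B -> comm_mx (invmx A) B.
Proof.
rewrite /comm_mx => AB; have [Au|/invmx_out-> //] := boolP (A \in unitmx).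
by rewrite -[LHS](mulmxK Au) -[invmx A *m B *m A]mulmxA -AB mulKmx.
Qed.

Section Hermitian.
Variable C : numClosedFieldType.

Lemma trmxC_mul m n p (A : 'M[C]_(m, n)) (B : 'M[C]_(n, p)) :
  (A *m B)^t* = B^t* *m A^t*.
Proof. by rewrite trmx_mul map_mxM. Qed.

Lemma trmxC_tens m n p q (A : 'M[C]_(m, n)) (B : 'M[C]_(p, q)) :
  (A *t B)^t* = A^t* *t B^t*.
Proof. by rewrite trmx_tens map_mxT. Qed.

Lemma hermsymmxP n (A : 'M[C]_n) : reflect (A^t* = A) (A \is hermsymmx).
Proof. by rewrite is_hermitianmxE expr0 scale1r eq_sym; apply: eqP. Qed.

Lemma hermsymmx_congr m n (X : 'M[C]_(m, n)) (A : 'M[C]_n) :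
  A \is hermsymmx -> X *m A *m X^t* \is hermsymmx.
Proof.
by move/hermsymmxP=> Ah; apply/hermsymmxP; rewrite !trmxC_mul trmxCK Ah mulmxA.
Qed.

Lemma hermsymmx_invmx n (A : 'M[C]_n) :
  A \is hermsymmx -> invmx A \is hermsymmx.
Proof.
by move/hermsymmxP=> Ah; apply/hermsymmxP; rewrite trmx_inv map_invmx Ah.
Qed.

Lemma hermsymmx_diag n (d : 'rV[C]_n) :
  (forall j, 0 <= d 0 j) -> diag_mx d \is hermsymmx.
Proof.
move=> d_ge0; apply/hermsymmxP; rewrite tr_diag_mx map_diag_mx.
by congr diag_mx; apply/rowP=> j; rewrite !mxE; exact: geC0_conj.
Qed.

Lemma pdmx_psdmx n (A : 'M[C]_n) : pdmx A -> psdmx A.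
Proof.
case=> Ah A_gt0; split=> // v.
by have [->|/A_gt0/ltW //] := eqVneq v 0; rewrite !mul0mx mxE.
Qed.

Lemma psdmx_congr m n (X : 'M[C]_(m, n)) (A : 'M[C]_n) :
  psdmx A -> psdmx (X *m A *m X^t*).
Proof.
case=> Ah A_ge0; split=> [|v]; first exact: hermsymmx_congr.
by have := A_ge0 (v *m X); rewrite trmxC_mul !mulmxA.
Qed.

Lemma psdmx_invmx n (A : 'M[C]_n) : psdmx A -> psdmx (invmx A).
Proof.
move=> A_psd; have [Au|/invmx_out-> //] := boolP (A \in unitmx).
have /hermsymmxP Sh := hermsymmx_invmx A_psd.1.
have -> : invmx A = invmx A *m A *m (invmx A)^t* by rewrite Sh mulmxK.
exact: psdmx_congr.
Qed.

End Hermitian.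

Section Kronecker.
Variable C : numClosedFieldType.

Lemma sum_mxtens_index (V : nmodType) m n (F : 'I_(m * n) -> V) :
  \sum_a F a = \sum_(i < m) \sum_(k < n) F (mxtens_index (i, k)).
Proof.
rewrite pair_big (reindex (@mxtens_index m n)) /=; last first.
  by exists (@mxtens_unindex m n) => x _; [apply: mxtens_indexK|apply: mxtens_unindexK].
by apply: eq_bigr => -[i k] _.
Qed.

Lemma trmxC_formE n (u v : 'rV[C]_n) (A : 'M[C]_n) :
  (u *m A *m v^t*) 0 0 = \sum_a \sum_b u 0 a * A a b * (v 0 b)^*.
Proof.
rewrite [LHS]mxE exchange_big /=; apply: eq_bigr => b _.
by rewrite !mxE mulr_suml; apply: eq_bigr => a _.
Qed.

Lemma tens1mx_formE m n (G : 'M[C]_n) (x : 'rV[C]_(m * n)) :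
  (x *m (1%:M *t G) *m x^t*) 0 0 =
  \sum_i (let x_i := \row_k x 0 (mxtens_index (i, k)) in (x_i *m G *m x_i^t*) 0 0).
Proof.
rewrite trmxC_formE sum_mxtens_index; apply: eq_bigr => i _.
rewrite /= trmxC_formE; apply: eq_bigr => k _.
rewrite sum_mxtens_index (bigD1 i) //= [X in _ + X]big1 ?addr0; last first.
  move=> j /negPf nij; apply: big1 => l _.
  by rewrite tensmxE mxE eq_sym nij mulr0n mul0r mulr0 mul0r.
by apply: eq_bigr => l _; rewrite tensmxE !mxE eqxx mulr1n mul1r.
Qed.

Lemma psdmx_tens1mx m n (G : 'M[C]_n) : psdmx G -> psdmx (1%:M *t G : 'M_(m * n)).
Proof.
case=> /hermsymmxP Gh G_ge0; split=> [|x].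
  by apply/hermsymmxP; rewrite trmxC_tens Gh tr_scalar_mx map_scalar_mx rmorph1.
by rewrite tens1mx_formE; apply: sumr_ge0 => i _; apply: G_ge0.
Qed.

End Kronecker.

Section UnitaryConj.
Variables (C : numClosedFieldType) (n : nat) (V : 'M[C]_n).
Hypothesis V_unitary : V \is unitarymx.

Let unconj (X : 'M[C]_n) := V^t* *m X *m V.

Let unconjM X Y : unconj (X *m Y) = unconj X *m unconj Y.
Proof. by rewrite /unconj !mulmxA mulmxtVK. Qed.

Let unconj_inj : injective unconj.
Proof.
move=> X Y /(congr1 (fun Z => V *m Z *m V^t*)).
by rewrite /unconj !mulmxA (unitarymxP V_unitary) !mul1mx !mulmxtVK.
Qed.

Let unconjK D : unconj (V *m D *m V^t*) = D.
Proof.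
by rewrite /unconj !mulmxA (mulmx1C (unitarymxP V_unitary)) mul1mx mulmxKtV.
Qed.

Lemma comm_mx_unitary_conj S D :
  comm_mx S (V *m D *m V^t*) <-> comm_mx (V^t* *m S *m V) D.
Proof.
rewrite /comm_mx; split=> SD.
  by have := congr1 unconj SD; rewrite unconjM (unconjM _ S) unconjK.
by apply: unconj_inj; rewrite unconjM (unconjM _ S) unconjK SD.
Qed.

Lemma comm_mx_unitary_diag_map S d (f : C -> C) :
  comm_mx S (V *m diag_mx d *m V^t*) ->
  comm_mx S (V *m diag_mx (map_mx f d) *m V^t*).
Proof. by move/comm_mx_unitary_conj/comm_diag_mx_map/comm_mx_unitary_conj. Qed.

End UnitaryConj.

Lemma posp_inv_ge0 (C : numClosedFieldType) (mu t : C) : 0 <= posp_inv mu t.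
Proof. by rewrite /posp_inv; case: eqP => //; case: ifP. Qed.

Theorem lemma5 (C : numClosedFieldType) (k L N : nat) (H : 'M[C]_(k, L))
  (tau : 'I_L -> C)
  (htau_eig : char_poly (H ^t* *m H) = \prod_(i < L) ('X - (tau i)%:P))
  (htau_ge0 : forall i, 0 <= tau i)
  (hN : (1 <= N)%N)
  (G : 'M[C]_N) (hG : pdmx G)
  (V : 'M[C]_(L * N)) (hV : V \is unitarymx)
  (hW : kron (H ^t* *m H) (1%:M : 'M[C]_N)
        = V *m diag_mx (\row_j tau (blk j)) *m V ^t*)
  (sigma02 mu : C) (hsigma : 0 < sigma02) (hmu : 0 < mu) :
  let alpha := \row_(j < L * N) (sigma02 * posp_inv mu (tau (blk j))) in
  let Kbar := V *m diag_mx alpha *m V ^t* in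
  let SigmaA := invmx (kron (1%:M : 'M[C]_L) G) *m Kbar in
  SigmaA \is hermsymmx /\ psdmx SigmaA.
Proof.
move=> alpha Kbar SigmaA.
set T := kron (1%:M : 'M[C]_L) G; set d := \row_j tau (blk j) in hW.
set q := map_mx (fun t => sqrtC (sigma02 * posp_inv mu t)) d.
set P := V *m diag_mx q *m V^t*.
have q_ge0 j : 0 <= q 0 j.
  by rewrite !mxE sqrtC_ge0 (mulr_ge0 (ltW hsigma)) ?posp_inv_ge0.
have /hermsymmxP Ph : P \is hermsymmx by apply/hermsymmx_congr/hermsymmx_diag.
have KP : Kbar = P *m P.
  rewrite /P !mulmxA mulmxKtV // -(mulmxA V) mulmx_diag /Kbar.
  by congr (_ *m diag_mx _ *m _); apply/rowP=> j; rewrite !mxE -expr2 sqrtCK.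
have TP : comm_mx (invmx T) P.
  apply/comm_mx_unitary_diag_map/comm_mx_invmx => //.
  by rewrite -hW /comm_mx !tensmx_mul !mul1mx !mulmx1.
have -> : SigmaA = P *m invmx T *m P^t* by rewrite /SigmaA KP mulmxA TP Ph.
have SigmaA_psd : psdmx (P *m invmx T *m P^t*).
  exact/psdmx_congr/psdmx_invmx/psdmx_tens1mx/pdmx_psdmx.
by split; first exact: SigmaA_psd.1.
Qed.
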